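(* Let ${\cal P}={\cal P}_{in}\cup{\cal P}_{out}$, let $\gamma$ be an assumption formula, let $D$ be a flagging monitor over $2^{{\cal P}_{in}}$, and let $\pi=\gamma\rightarrow\pi'$ where either $\pi'=D{:}\phi$ with $\phi$ an LTL formula (simple trigger), or $\pi'=(D;\varphi)^*$ with $\varphi$ a co-safety LTL formula (repeating trigger). Let $t(\pi)$ denote $\gamma\rightarrow\phi$ in the first case and $\gamma\rightarrow\varphi$ in the second. Let $C_{t(\pi)}$ be a Mealy machine that realises $t(\pi)$ in the simple-trigger case, and that tightly realises $t(\pi)$ in the repeating-trigger case. Then there is a Mealy machine (built from $D$ and $C_{t(\pi)}$) that realises $\pi$.
   Context: Traces $\sigma=\sigma_0\sigma_1\cdots$ have letters $\sigma_i\subseteq{\cal P}$; $\sigma_{i,j}=\sigma_i\cdots\sigma_j$, $\sigma_{i,\infty}$ the suffix from $i$. LTL: $\phi ::= \mathit{tt}\mid\mathit{ff}\mid e\mid\neg e\mid\phi\wedge\phi\mid\phi\vee\phi\mid X\phi\mid\phi U\phi\mid G\phi$, standard infinite-trace semantics; co-safety: no $G$. Finite semantics of co-safety formulas on $\sigma_{i,j}$ ($j<\infty$): atoms/Booleans at position $i$; $X\varphi$ iff $j>i$ and $\sigma_{i+1,j}\vdash\varphi$; $\varphi U\psi$ iff some $l\in[i,j]$ has $\sigma_{l,j}\vdash\psi$ and $\sigma_{k,j}\vdash\varphi$ for $k\in[i,l)$. Tight satisfaction $\sigma_{i,j}\Vdash\varphi$: $\sigma_{i,j}\vdash\varphi$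 and $\sigma_{i,k}\not\vdash\varphi$ for all $i\le k<j$. Assumptions: $\alpha ::= \mathit{tt}\mid\mathit{ff}\mid a\mid\neg\alpha\mid\alpha\wedge\alpha\mid\alpha\vee\alpha$; $\beta ::= \alpha\mid X\alpha\mid\beta\wedge\beta\mid\beta\vee\beta$; $\gamma ::= G\beta\mid GF\alpha\mid\gamma\wedge\gamma$. Flagging monitor over $\Sigma=2^{{\cal P}_{in}}$: $D=\langle \Sigma, \mathbb{V}, \Theta, Q, \theta_0, q_0, F, \perp, \rightarrow\rangle$ with typed variables $\mathbb{V}$ (arbitrary domains), valuations $\Theta$, finite states $Q$, initial valuation $\theta_0$, initial state $q_0$, flagging states $F\subseteq Q\setminus\{q_0\}$, sink $\perp$, deterministic transitions $q\xrightarrow{g\mapsto a}q'$ ($q\ne\perp$), guards $g:\Sigma\times\Theta\to\{\mathit{true},\mathit{false}\}$, actions $a:\Sigma\times\Theta\to\Theta$. Semantics on $(q,\theta)$ reading $E$: (1) if $q\notin F\cup\{\perp\}$ and a transition from $q$ has true guard, take it and set the valuation to $a(E,\theta)$; (2) if $q\notin F\cup\{\perp\}$ and no guard holds, stay; (3) $\perp$ stays; (4) a state in $F$ moves to $\perp$. On traces over $2^{\cal P}$ the monitor reads $\sigma_i\cap{\cal P}_{in}$. $\sigma_{i,j}\Vdash D$ iff the run from $(q_0,\theta_0)$ on $\sigma_i,\dots,\sigma_j$ ends in $F$. Semantics of triggers: $\sigma_{i,\infty}\vdash D{:}\phi$ iff for all $j\ge i$, $\sigma_{i,j}\Vdash D$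 implies $\sigma_{j,\infty}\vdash\phi$. $\sigma_{i,k}\vdash D;\varphi$ iff some $j\in[i,k]$ has $\sigma_{i,j}\Vdash D$ and $\sigma_{j,k}\Vdash\varphi$. Restart points: $0$ is one; if $p$ is one and $\sigma_{p,k}\vdash D;\varphi$ then $k+1$ is one. $\sigma\vdash(D;\varphi)^*$ iff for every restart point $p$ and every $i\ge p$ with $\sigma_{p,i}\Vdash D$ there is $k\ge i$ with $\sigma_{p,k}\vdash D;\varphi$. $\sigma\vdash\gamma\rightarrow\pi'$ iff $\sigma\vdash\gamma$ implies $\sigma_{0,\infty}\vdash\pi'$. Mealy machine: $C=\langle S,s_0,2^{{\cal P}_{in}},2^{{\cal P}_{out}},\rightarrow,F\rangle$, complete deterministic $\rightarrow:S\times2^{{\cal P}_{in}}\to2^{{\cal P}_{out}}\times S$, accepting states $F$. A run $s_0s_1\cdots$ with $s_i\xrightarrow{I_i/O_i}s_{i+1}$ produces $w$ with $w_i=I_i\cup O_i$; $C$ accepts a prefix $u$ if $s_{|u|}\in F$. $C$ realises a formula if every produced word satisfies it. $C$ tightly realises $\gamma\rightarrow\varphi$ ($\varphi$ co-safety) if it realises it and for each produced $w$ with $w\vdash\gamma$ there is a prefix $u$ of $w$ accepted by $C$, tightly satisfying $\varphi$, with no strict prefix of $u$ accepted by $C$. *)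

From mathcomp Require Import all_boot.
Set Implicit Arguments. Unset Strict Implicit. Unset Printing Implicit Defensive.

Section Defs.
Variables (Pin Pout : finType).

Definition letter := {set (Pin + Pout)}.
Definition trace := nat -> letter.
Definition ilet := {set Pin}.
Definition olet := {set Pout}.

Inductive ltl :=
| Ltt | Lff | Lat of (Pin + Pout) | Lnat of (Pin + Pout)
| Land of ltl & ltl | Lor of ltl & ltl
| LX of ltl | LU of ltl & ltl | LG of ltl.

Fixpoint cosafe (f : ltl) : bool :=
  match f with
  | Ltt | Lff | Lat _ | Lnat _ => true
  | Land a b | Lor a b | LU a b => cosafe a && cosafe b
  | LX a => cosafe a
  | LG _ => false
  end.

Fixpoint sat (s : trace) (i : nat) (f : ltl) : Prop :=
  match f with
  | Ltt => True
  | Lff => False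
  | Lat e => e \in s i
  | Lnat e => e \notin s i
  | Land a b => sat s i a /\ sat s i b
  | Lor a b => sat s i a \/ sat s i b
  | LX a => sat s i.+1 a
  | LU a b => exists l, i <= l /\ sat s l b /\ forall k, i <= k < l -> sat s k a
  | LG a => forall k, i <= k -> sat s k a
  end.

(* finite semantics of co-safety formulas: fsat s i j f <-> s_{i,j} |- f
   (the G case never occurs for co-safety formulas) *)
Fixpoint fsat (s : trace) (i j : nat) (f : ltl) : Prop :=
  match f with
  | Ltt => True
  | Lff => False
  | Lat e => e \in s i
  | Lnat e => e \notin s i
  | Land a b => fsat s i j a /\ fsat s i j b
  | Lor a b => fsat s i j a \/ fsat s i j b
  | LX a => i < j /\ fsat s i.+1 j a
  | LU a b => exists l, i <= l <= j /\ fsat s l j b /\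
                forall k, i <= k < l -> fsat s k j a
  | LG _ => False
  end.

Definition tsat (s : trace) (i j : nat) (f : ltl) : Prop :=
  fsat s i j f /\ forall k, i <= k < j -> ~ fsat s i k f.

Inductive alpha :=
| Att | Aff | Aat of Pin | Anot of alpha | Aand of alpha & alpha | Aor of alpha & alpha.
Inductive beta :=
| Bal of alpha | BX of alpha | Band of beta & beta | Bor of beta & beta.
Inductive gamma :=
| GG of beta | GGF of alpha | Gand of gamma & gamma.

Fixpoint asat (E : letter) (a : alpha) : Prop :=
  match a with
  | Att => True
  | Aff => False
  | Aat p => inl p \in E
  | Anot b => ~ asat E b
  | Aand b c => asat E b /\ asat E c
  | Aor b c => asat E b \/ asat E c
  end.

Fixpoint bsat (s : trace) (i : nat) (b : beta) : Prop :=
  match b with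
  | Bal a => asat (s i) a
  | BX a => asat (s i.+1) a
  | Band b c => bsat s i b /\ bsat s i c
  | Bor b c => bsat s i b \/ bsat s i c
  end.

Fixpoint gsat (s : trace) (i : nat) (g : gamma) : Prop :=
  match g with
  | GG b => forall k, i <= k -> bsat s k b
  | GGF a => forall k, i <= k -> exists l, k <= l /\ asat (s l) a
  | Gand g1 g2 => gsat s i g1 /\ gsat s i g2
  end.

(* mV is the type of valuations Theta of the typed variables. A transition
   q --g|->a--> q' is stored as ((g, a), q') in mtrans q. *)
Unset Implicit Arguments.
Record monitor := Monitor {
  mQ : finType;
  mV : Type;
  mq0 : mQ;
  mth0 : mV;
  mF : {set mQ};
  mbot : mQ;
  mtrans : mQ -> seq ((ilet -> mV -> bool) * (ilet -> mV -> mV) * mQ);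
  mq0F : mq0 \notin mF;
  mbotF : mbot \notin mF;
  mbot_trans : mtrans mbot = [::];
  mdet : forall q E th, count (fun t => t.1.1 E th) (mtrans q) <= 1
}.


Definition dstep (D : monitor) (st : mQ D * mV D) (E : ilet) : mQ D * mV D :=
  let: (q, th) := st in
  if q == mbot D then (q, th)
  else if q \in mF D then (mbot D, th)
  else match [seq t <- mtrans D q | t.1.1 E th] with
       | t :: _ => (t.2, t.1.2 E th)
       | [::] => (q, th)
       end.

(* the monitor reads sigma_i ∩ P_in *)
Definition inp (x : letter) : ilet := [set a | inl a \in x].

(* configuration after reading sigma_i, ..., sigma_{i+n-1} from (q0, theta0) *)
Fixpoint runD (D : monitor) (s : trace) (i n : nat) : mQ D * mV D :=
  match n with
  | 0 => (mq0 D, mth0 D)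
  | n'.+1 => @dstep D (runD D s i n') (inp (s (i + n')))
  end.

Definition dflag (D : monitor) (s : trace) (i j : nat) : Prop :=
  i <= j /\ (runD D s i (j - i).+1).1 \in mF D.

Definition simple_sat (D : monitor) (phi : ltl) (s : trace) (i : nat) : Prop :=
  forall j, dflag D s i j -> sat s j phi.

Definition dseq (D : monitor) (phi : ltl) (s : trace) (i k : nat) : Prop :=
  exists j, i <= j <= k /\ dflag D s i j /\ tsat s j k phi.

Inductive restart (D : monitor) (phi : ltl) (s : trace) : nat -> Prop :=
| restart0 : restart D phi s 0
| restartS p k : restart D phi s p -> dseq D phi s p k -> restart D phi s k.+1.

Definition rep_sat (D : monitor) (phi : ltl) (s : trace) : Prop :=
  forall p i, restart D phi s p -> p <= i -> dflag D s p i ->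
    exists k, i <= k /\ dseq D phi s p k.

Inductive trigger :=
| Simple of monitor & ltl
| Repeat of monitor & ltl.

Definition trig_wf (pi : trigger) : bool :=
  match pi with Simple _ _ => true | Repeat _ phi => cosafe phi end.

Definition spec_sat (g : gamma) (pi : trigger) (s : trace) : Prop :=
  gsat s 0 g ->
  match pi with
  | Simple D phi => simple_sat D phi s 0
  | Repeat D phi => rep_sat D phi s
  end.

Unset Implicit Arguments.
Record mealy := Mealy {
  cS : Type;
  cs0 : cS;
  ctrans : cS -> ilet -> olet * cS;
  cacc : cS -> bool
}.


Fixpoint cstate (C : mealy) (I : nat -> ilet) (n : nat) : cS C :=
  match n with
  | 0 => cs0 C
  | n'.+1 => (ctrans C (cstate C I n') (I n')).2
  end.

Definition cword (C : mealy) (I : nat -> ilet) : trace :=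
  fun n => [set (inl a : Pin + Pout) | a in I n]
           :|: [set (inr b : Pin + Pout) | b in (ctrans C (cstate C I n) (I n)).1].

Definition realises (C : mealy) (P : trace -> Prop) : Prop :=
  forall I : nat -> ilet, P (cword C I).

(* C tightly realises gamma -> phi (phi co-safety).  A prefix u of w of
   length m (m >= 1) is w_0..w_{m-1}; it is accepted iff s_m is accepting. *)
Definition tightly_realises (C : mealy) (g : gamma) (phi : ltl) : Prop :=
  realises C (fun s => gsat s 0 g -> sat s 0 phi) /\
  forall I : nat -> ilet, gsat (cword C I) 0 g ->
    exists m, 0 < m /\ cacc C (cstate C I m) /\ tsat (cword C I) 0 m.-1 phi /\
      forall m', m' < m -> ~~ cacc C (cstate C I m').

Definition realises_t (C : mealy) (g : gamma) (pi : trigger) : Prop :=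
  match pi with
  | Simple _ phi => realises C (fun s => gsat s 0 g -> sat s 0 phi)
  | Repeat _ phi => tightly_realises C g phi
  end.

End Defs.

From mathcomp Require Import all_boot zify.
From Stdlib Require Import FunctionalExtensionality.

(** The realising machine watches the input with the monitor D and stays
    silent; at the letter where D flags it starts C.  From that letter on its
    word is the word C produces on the correspondingly shifted input.  An
    assumption gamma speaks only about inputs and is invariant under taking
    suffixes, so it still holds for that shifted input and C's guarantee
    transfers to the flag position.  For a repeating trigger the machine hands
    control back to the monitor as soon as C accepts; tightness of C says that
    this happens exactly one letter after the end of the tight match of phi,
    so the machine restarts the monitor precisely at the restart points of
    (D ; phi)^*. *)

Set Implicit Arguments.
Unset Strict Implicit.
Unset Printing Implicit Defensive.

Section Traces.
Variables Pin Pout : finType.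
Implicit Types (s : trace Pin Pout) (f : ltl Pin Pout).
Local Notation cword := (cword Pin Pout).
Local Notation inp := (inp Pin Pout).

Definition tshift s a : trace Pin Pout := fun n => s (a + n).

Lemma sat_shift s a f i : sat s (a + i) f <-> sat (tshift s a) i f.
Proof.
elim: f i => //= [f IHf h IHh|f IHf h IHh|f IHf|f IHf h IHh|f IHf] i.
- by rewrite IHf IHh.
- by rewrite IHf IHh.
- by rewrite -IHf addnS.
- split=> -[l [il [hl hf]]].
  + exists (l - a); rewrite -IHh subnKC; last lia.
    split; [lia | split=> // k ik]; rewrite -IHf; apply: hf; lia.
  + exists (a + l); rewrite IHh; split; [lia | split=> // k ik].
    have -> : k = a + (k - a) by lia.
    rewrite IHf; apply: hf; lia.
- split=> hf k ik.
  + rewrite -IHf; apply: hf; lia.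
  + have -> : k = a + (k - a) by lia.
    rewrite IHf; apply: hf; lia.
Qed.

Lemma fsat_shift s a f i j : fsat s (a + i) (a + j) f <-> fsat (tshift s a) i j f.
Proof.
elim: f i => //= [f IHf h IHh|f IHf h IHh|f IHf|f IHf h IHh] i.
- by rewrite IHf IHh.
- by rewrite IHf IHh.
- by rewrite -IHf addnS ltn_add2l.
- split=> -[l [il [hl hf]]].
  + exists (l - a); rewrite -IHh subnKC; last lia.
    split; [lia | split=> // k ik]; rewrite -IHf; apply: hf; lia.
  + exists (a + l); rewrite IHh; split; [lia | split=> // k ik].
    have -> : k = a + (k - a) by lia.
    rewrite IHf; apply: hf; lia.
Qed.

Lemma tsat_shift s a f i j : tsat s (a + i) (a + j) f <-> tsat (tshift s a) i j f.
Proof.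
rewrite /tsat fsat_shift; split=> -[hj tight]; split=> // k ik.
- rewrite -fsat_shift; apply: tight; lia.
- have -> : k = a + (k - a) by lia.
  rewrite fsat_shift; apply: tight; lia.
Qed.

Lemma eq_fsat s1 s2 f i j : (forall n, n <= j -> s1 n = s2 n) -> i <= j ->
  fsat s1 i j f <-> fsat s2 i j f.
Proof.
move=> eq_s; elim: f i => //= [e|e|f IHf h IHh|f IHf h IHh|f IHf|f IHf h IHh] i ij.
- by rewrite eq_s.
- by rewrite eq_s.
- by rewrite IHf // IHh.
- by rewrite IHf // IHh.
- by split=> -[ij' hf]; split; rewrite // ?IHf // -IHf.
- split=> -[l [il [hl hf]]]; exists l; split=> //.
  + split; first by rewrite -IHh //; lia.
    by move=> k ik; rewrite -IHf; [apply: hf | lia].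
  + split; first by rewrite IHh //; lia.
    by move=> k ik; rewrite IHf; [apply: hf | lia].
Qed.

Lemma eq_tsat s1 s2 f i j : (forall n, n <= j -> s1 n = s2 n) -> i <= j ->
  tsat s1 i j f <-> tsat s2 i j f.
Proof.
move=> eq_s ij; rewrite /tsat (eq_fsat _ eq_s ij).
have eq_s' k : k < j -> forall n, n <= k -> s1 n = s2 n.
  by move=> kj n nk; apply: eq_s; lia.
split=> -[hf tight]; split=> // k /andP[ik kj].
- by rewrite -(eq_fsat _ (eq_s' k kj) ik); apply: tight; rewrite ik.
- by rewrite (eq_fsat _ (eq_s' k kj) ik); apply: tight; rewrite ik.
Qed.

Lemma tsat_uniq s f i j k : i <= j -> i <= k -> tsat s i j f -> tsat s i k f -> j = k.
Proof.
move=> ij ik [hj tight_j] [hk tight_k].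
case: (ltngtP j k) => // [jk | kj].
- by case: (tight_k j); rewrite ?ij.
- by case: (tight_j k); rewrite ?ik.
Qed.

Lemma eq_asat (E1 E2 : letter Pin Pout) a : inp E1 = inp E2 -> asat E1 a <-> asat E2 a.
Proof.
move=> eqE; elim: a => //= [p|a IH|a IHa b IHb|a IHa b IHb].
- by have := congr1 (fun A : {set Pin} => p \in A) eqE; rewrite !inE => ->.
- by rewrite IH.
- by rewrite IHa IHb.
- by rewrite IHa IHb.
Qed.

Lemma eq_gsat s1 s2 g i :
  (forall n, inp (s1 n) = inp (s2 n)) -> gsat s1 i g <-> gsat s2 i g.
Proof.
move=> eq_s.
have eq_bsat k b : bsat s1 k b <-> bsat s2 k b.
  by elim: b => /= [a|a|b IHb c IHc|b IHb c IHc]; rewrite ?IHb ?IHc; try exact: eq_asat.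
elim: g i => /= [b|a|g1 IH1 g2 IH2] i.
- by split=> hg k ik; [rewrite -eq_bsat | rewrite eq_bsat]; apply: hg.
- split=> hg k ik; have [l [kl hl]] := hg k ik; exists l; split=> //.
  + by rewrite -(eq_asat _ (eq_s l)).
  + by rewrite (eq_asat _ (eq_s l)).
- by rewrite IH1 IH2.
Qed.

Lemma gsat_le s g i j : i <= j -> gsat s i g -> gsat s j g.
Proof.
move=> ij; elim: g => /= [b|a|g1 IH1 g2 IH2].
- by move=> hg k jk; apply: hg; lia.
- by move=> hg k jk; apply: hg; lia.
- by case=> /IH1 ? /IH2 ?.
Qed.

Lemma bsat_shift s a k b : bsat s (a + k) b <-> bsat (tshift s a) k b.
Proof.
by elim: b => /= [x|x|b IHb c IHc|b IHb c IHc]; rewrite /tshift ?addnS ?IHb ?IHc.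
Qed.

Lemma gsat_shift s g a : gsat s a g -> gsat (tshift s a) 0 g.
Proof.
elim: g => /= [b|al|g1 IH1 g2 IH2].
- by move=> hg k _; rewrite -bsat_shift; apply: hg; rewrite leq_addr.
- move=> hg k _; have [l [kl hl]] := hg (a + k) (leq_addr _ _).
  by exists (l - a); rewrite /tshift subnKC; [split=> //; lia | lia].
- by case=> /IH1 ? /IH2 ?.
Qed.

Lemma inp_cword (X : mealy Pin Pout) I n : inp (cword X I n) = I n.
Proof.
apply/setP=> p; rewrite inE in_setU (mem_imset _ _ (@inl_inj _ _)).
by case: imsetP => [[] // | _]; rewrite orbF.
Qed.

Lemma gsat_cword_suffix (X Y : mealy Pin Pout) I j g :
  gsat (cword X I) 0 g -> gsat (cword Y (fun n => I (j + n))) 0 g.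
Proof.
move=> /(gsat_le (leq0n j)) /gsat_shift; apply: (iffLR (eq_gsat _ _ _)) => n.
by rewrite /tshift !inp_cword.
Qed.

End Traces.

Section Monitor.
Variables (Pin Pout : finType) (D : monitor Pin).
Local Notation runD := (runD Pin Pout D).

Lemma dstep_flagged d E : d.1 \in mF Pin D -> (dstep Pin D d E).1 = mbot Pin D.
Proof.
case: d => q th /= qF; have /negbTE -> : q != mbot Pin D.
  by apply: contraNneq (mbotF Pin D) => <-.
by rewrite qF.
Qed.

Lemma dstep_bot d E : d.1 = mbot Pin D -> (dstep Pin D d E).1 = mbot Pin D.
Proof. by case: d => q th /= ->; rewrite eqxx. Qed.

Lemma runD_bot_after_flag s p a b :
  (runD s p a).1 \in mF Pin D -> a < b -> (runD s p b).1 = mbot Pin D.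
Proof.
move=> aF; elim: b => // b IH; rewrite ltnS leq_eqVlt => /predU1P[<- | ab] /=.
- exact: dstep_flagged.
- by rewrite dstep_bot // IH.
Qed.

Lemma runD_flag_once s p a b :
  (runD s p a).1 \in mF Pin D -> a < b -> (runD s p b).1 \notin mF Pin D.
Proof. by move=> aF /(runD_bot_after_flag aF) ->; exact: mbotF. Qed.

End Monitor.

Section Machine.
Variables (Pin Pout : finType) (D : monitor Pin) (C : mealy Pin Pout) (rep : bool).
Local Notation dconf := (mQ Pin D * mV Pin D)%type.
Local Notation runD := (runD Pin Pout D).

Inductive trig_state := Watching of dconf | Running of cS Pin Pout C.

Definition dinit : dconf := (mq0 Pin D, mth0 Pin D).

Definition resume (c : cS Pin Pout C) : trig_state :=
  if rep && cacc Pin Pout C c then Watching dinit else Running c.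

Definition run_ctrl (c : cS Pin Pout C) (E : ilet Pin) : olet Pout * trig_state :=
  ((ctrans Pin Pout C c E).1, resume (ctrans Pin Pout C c E).2).

(* C is started on the flagging letter itself, so its word begins at the flag. *)
Definition trig_step (st : trig_state) (E : ilet Pin) : olet Pout * trig_state :=
  match st with
  | Watching d =>
      if (dstep Pin D d E).1 \in mF Pin D then run_ctrl (cs0 Pin Pout C) E
      else (set0, Watching (dstep Pin D d E))
  | Running c => run_ctrl c E
  end.

Definition trigger_mealy : mealy Pin Pout :=
  Mealy Pin Pout trig_state (Watching dinit) trig_step (fun _ => false).

Lemma resume_running c : ~~ (rep && cacc Pin Pout C c) -> resume c = Running c.
Proof. by rewrite /resume => /negbTE ->. Qed.

Variable I : nat -> ilet Pin.
Local Notation st := (cstate Pin Pout trigger_mealy I).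
Local Notation s := (cword Pin Pout trigger_mealy I).

Lemma cstate_watching p t : st p = Watching dinit ->
  (forall t', t' < t -> (runD s p t'.+1).1 \notin mF Pin D) ->
  st (p + t) = Watching (runD s p t).
Proof.
move=> stp; elim: t => [|t IH] noflag; first by rewrite addn0.
rewrite addnS /= IH => [|t' t't]; last by apply: noflag; rewrite ltnS ltnW.
by have := noflag t (ltnSn t); rewrite /= inp_cword => /negbTE ->.
Qed.

Lemma flag_triggers p j : st p = Watching dinit -> dflag Pin Pout D s p j ->
  exists2 d, st j = Watching d & (dstep Pin D d (I j)).1 \in mF Pin D.
Proof.
move=> stp [pj jF]; exists (runD s p (j - p)).
- rewrite -{1}(subnKC pj); apply: cstate_watching => // t' t'j.
  by apply: contraTN jF => t'F; apply: runD_flag_once t'F _; rewrite ltnS.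
- by move: jF; rewrite /= inp_cword subnKC.
Qed.

Section Triggered.
Variables (j : nat) (d : dconf).
Hypotheses (stj : st j = Watching d) (jF : (dstep Pin D d (I j)).1 \in mF Pin D).
Let I' n := I (j + n).

Lemma cstate_after_trigger n : 0 < n ->
  (forall m, m < n -> ~~ (rep && cacc Pin Pout C (cstate Pin Pout C I' m))) ->
  st (j + n) = resume (cstate Pin Pout C I' n).
Proof.
elim: n => // -[_ _ _ | n IH _ quiet]; first by rewrite addn1 /= stj /= jF /I' addn0.
rewrite addnS /= IH // => [|m mn]; last by apply: quiet; rewrite ltnW.
by rewrite resume_running //; apply: quiet.
Qed.

Lemma cword_after_trigger n :
  (forall m, m <= n -> ~~ (rep && cacc Pin Pout C (cstate Pin Pout C I' m))) ->
  s (j + n) = cword Pin Pout C I' n.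
Proof.
move=> quiet; rewrite /cword; congr (_ :|: _).
case: n quiet => [|n] quiet; first by rewrite addn0 /= stj /= jF /I' addn0.
rewrite cstate_after_trigger // => [|m mn]; last by apply: quiet; rewrite ltnW.
by rewrite resume_running //; apply: quiet.
Qed.

End Triggered.
End Machine.

Arguments dinit {Pin D}.
Arguments Watching {Pin Pout D C}.

Section Realisation.
Variables (Pin Pout : finType) (g : gamma Pin) (D : monitor Pin) (phi : ltl Pin Pout).
Variable C : mealy Pin Pout.

Lemma simple_trigger_realised :
  realises Pin Pout C (fun s => gsat s 0 g -> sat s 0 phi) ->
  realises Pin Pout (trigger_mealy D C false)
    (spec_sat Pin Pout g (Simple Pin Pout D phi)).
Proof.
move=> HC I /= hg j flag.
have [d stj jF] := flag_triggers (p := 0) erefl flag.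
have word : tshift (cword Pin Pout (trigger_mealy D C false) I) j
            = cword Pin Pout C (fun n => I (j + n)).
  by apply: functional_extensionality => n; apply: (cword_after_trigger stj jF).
by rewrite -[j]addn0 sat_shift word; apply: HC; apply: gsat_cword_suffix hg.
Qed.

Section Repeating.
Hypothesis HC : tightly_realises Pin Pout C g phi.
Variable I : nat -> ilet Pin.
Local Notation st := (cstate Pin Pout (trigger_mealy D C true) I).
Local Notation s := (cword Pin Pout (trigger_mealy D C true) I).
Hypothesis hg : gsat s 0 g.

Lemma flag_tight_match p j : st p = Watching dinit -> dflag Pin Pout D s p j ->
  exists k, j <= k /\ tsat s j k phi /\ st k.+1 = Watching dinit.
Proof.
move=> stp /(flag_triggers stp) [d stj jF].
have [m [m_gt0 [acc [tight first]]]] := HC.2 _ (gsat_cword_suffix C j hg).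
exists (j + m.-1); split; first exact: leq_addr.
split.
- rewrite -{1}[j]addn0 tsat_shift; apply: (iffLR (eq_tsat _ _ (leq0n _))) tight => n nm.
  by rewrite /tshift (cword_after_trigger stj jF) // => m' m'n; apply: first; lia.
- by rewrite -addnS prednK // (cstate_after_trigger stj jF) // /resume acc.
Qed.

Lemma restart_watching p : restart Pin Pout D phi s p -> st p = Watching dinit.
Proof.
elim=> [//|q k _ stq [j [/andP[_ jk] [flag tight]]]].
have [k' [jk' [tight' stk']]] := flag_tight_match stq flag.
by rewrite -(tsat_uniq jk' jk tight' tight).
Qed.

End Repeating.

Lemma repeat_trigger_realised : tightly_realises Pin Pout C g phi ->
  realises Pin Pout (trigger_mealy D C true)
    (spec_sat Pin Pout g (Repeat Pin Pout D phi)).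
Proof.
move=> HC I /= hg p i hp pi flag.
have [k [ik [tight _]]] := flag_tight_match HC hg (restart_watching HC hg hp) flag.
by exists k; split=> //; exists i; rewrite pi ik.
Qed.

End Realisation.

Theorem theorem4 (Pin Pout : finType) (g : gamma Pin) (pi : trigger Pin Pout)
    (C : mealy Pin Pout) :
  trig_wf Pin Pout pi -> realises_t Pin Pout C g pi ->
  exists M : mealy Pin Pout, realises Pin Pout M (spec_sat Pin Pout g pi).
Proof.
case: pi => [D phi | D phi] _ /= HC.
- by exists (trigger_mealy D C false); apply: simple_trigger_realised.
- by exists (trigger_mealy D C true); apply: repeat_trigger_realised.
Qed.
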